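(* Let $f(x)=\frac{2x}{\tanh x}-\log\left(\frac{\cosh^2 x+1}{2}\right)$ for $x>0$. There is a point $x_1=1.606\ldots$ such that for all $x>0$, $$2<f(x)\le f(x_1)=2.1312\ldots .$$ *)

From Stdlib Require Import Reals.
Open Scope R_scope.

Definition fpaper (x : R) : R := 2 * x / tanh x - ln ((cosh x ^ 2 + 1) / 2).

From Stdlib Require Import Reals Lra Lia Factorial.
From Coquelicot Require Import Coquelicot.
Open Scope R_scope.

(* With h0 x = 2 cosh x sinh x - x (cosh^2 x + 1), one has
   f' = 2 h0 / (sinh^2 x (cosh^2 x + 1)).  Differentiating h0 four times gives
   h4 x = -8 x (cosh^2 x + sinh^2 x) < 0 for x > 0.  Since h0, h1, h2 vanish at 0,
   h3 0 = 2 and every h_k is eventually negative, each h_k is positive and then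
   negative on (0, oo), with a single sign change: so f increases up to the root x1
   of h0 and decreases afterwards.  Taylor bounds for exp locate x1 in
   (1.606, 1.607) and give f(1.606) <= f(x1) <= f(1.606) + 0.001 max f'.
   Finally f > 2: near 0 because f x >= 2 - sinh^2 x / 2, for x >= 5/2 because
   f x >= 2 x - ln ((cosh^2 x + 1) / 2) > 2, and in between by monotonicity. *)

(* [(x^0/0! + ... + x^n/n!, x^n/n!)], computed incrementally with integer
   literals so that [cbn] turns it into a rational number [lra] can handle. *)
Fixpoint exp_taylor (n : nat) (x : R) : R * R :=
  match n with
  | O => (1, 1)
  | S m => let (s, t) := exp_taylor m x in
           let t' := t * x / IZR (Z.of_nat (S m)) in (s + t', t')
  end.

Lemma exp_taylor_spec n x :
  exp_taylor n x = (sum_f_R0 (fun k => x ^ k / INR (fact k)) n, x ^ n / INR (fact n)).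
Proof.
  induction n as [|n IH]; [simpl; f_equal; field|].
  simpl exp_taylor; rewrite IH.
  replace (IZR _) with (INR (S n)) by (rewrite INR_IZR_INZ; reflexivity).
  assert (Hfact : INR (fact (S n)) = INR (S n) * INR (fact n))
    by (rewrite fact_simpl, mult_INR; reflexivity).
  assert (Hpos : 0 < INR (fact n)) by apply lt_0_INR, lt_O_fact.
  assert (HSn : 0 < INR (S n)) by (apply lt_0_INR; lia).
  simpl sum_f_R0; change (fact n + n * fact n)%nat with (fact (S n)).
  rewrite Hfact; f_equal; simpl pow; field; lra.
Qed.

Lemma exp_le_taylor_remainder n x :
  0 < x -> exp x * (1 - snd (exp_taylor (S n) x)) <= fst (exp_taylor n x).
Proof.
  intro Hx; rewrite !exp_taylor_spec; cbn [fst snd].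
  assert (Dexp : forall k t, Derive_n exp k t = exp t)
    by (intros; apply is_derive_n_unique, is_derive_n_exp).
  destruct (Taylor_Lagrange exp n 0 x Hx) as [z [Hz Hexp]].
  { intros t _ [|k] _; [exact I|].
    apply (ex_derive_ext exp); [intro; symmetry; apply Dexp|].
    exists (exp t); apply is_derive_exp. }
  rewrite Dexp, Rminus_0_r in Hexp.
  replace (sum_f_R0 _ n) with (sum_f_R0 (fun k => x ^ k / INR (fact k)) n) in Hexp
    by (apply sum_eq; intros; rewrite Dexp, exp_0; ring).
  assert (Hz_x : exp z <= exp x) by (apply Rlt_le, exp_increasing; lra).
  assert (Hterm : 0 <= x ^ S n / INR (fact (S n)))
    by (apply Rle_mult_inv_pos; [apply pow_le; lra | apply lt_0_INR, lt_O_fact]).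
  nra.
Qed.

Lemma exp_ge_of_taylor n x lo : 0 < x -> lo <= fst (exp_taylor n x) -> lo <= exp x.
Proof.
  rewrite exp_taylor_spec; intros Hx Hlo.
  pose proof (exp_ge_taylor x n (Rlt_le _ _ Hx)); simpl in Hlo; lra.
Qed.

Lemma exp_le_of_taylor n x hi :
  0 < x -> snd (exp_taylor (S n) x) < 1 ->
  fst (exp_taylor n x) <= hi * (1 - snd (exp_taylor (S n) x)) -> exp x <= hi.
Proof.
  intros Hx Hlt Hhi; pose proof (exp_le_taylor_remainder n x Hx).
  apply (Rmult_le_reg_r (1 - snd (exp_taylor (S n) x))); lra.
Qed.

Ltac exp_taylor_bound :=
  first [apply (exp_ge_of_taylor 15) | apply (exp_le_of_taylor 15)]; try lra; cbn; lra.

Lemma exp_1606_bounds :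
  2491419975999/500000000000 <= exp (1606/1000) <= 2491419976233/500000000000.
Proof. split; exp_taylor_bound. Qed.

Lemma exp_1607_bounds :
  24939126421/5000000000 <= exp (1607/1000) <= 4987825284673/1000000000000.
Proof. split; exp_taylor_bound. Qed.

Lemma exp_135030993_ge : 19293106233/5000000000 <= exp (135030993/100000000).
Proof. exp_taylor_bound. Qed.

Lemma exp_1350309929_le : exp (1350309929/1000000000) <= 38586212459/10000000000.
Proof. exp_taylor_bound. Qed.

Lemma exp_2_le : exp 2 <= 74/10.
Proof. exp_taylor_bound. Qed.

Lemma exp_5_ge : 148 <= exp 5.
Proof. exp_taylor_bound. Qed.

Lemma exp_mul_exp_opp t : exp t * exp (- t) = 1.
Proof. rewrite <- exp_plus, Rplus_opp_r; apply exp_0. Qed.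

Lemma exp_le_compat x y : x <= y -> exp x <= exp y.
Proof.
  intro Hxy; destruct (Rle_lt_or_eq_dec x y Hxy) as [Hlt | ->];
    [apply Rlt_le, exp_increasing | apply Rle_refl]; assumption.
Qed.

Lemma ln_le_sub_1 v : 0 < v -> ln v <= v - 1.
Proof.
  intro Hv; rewrite <- (ln_exp (v - 1)); apply ln_le; [assumption|].
  pose proof (exp_ineq1_le (v - 1)); lra.
Qed.

Lemma exp_opp_bounds t lo hi ulo uhi :
  0 < lo -> lo <= exp t <= hi -> ulo * hi <= 1 -> 1 <= uhi * lo ->
  ulo <= exp (- t) <= uhi.
Proof. intros; pose proof (exp_mul_exp_opp t); pose proof (exp_pos (- t)); split; nra. Qed.

Lemma exp_opp_1606_bounds :
  200688765751/1000000000000 <= exp (- (1606/1000)) <= 200688765771/1000000000000.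
Proof.
  pose proof exp_1606_bounds.
  apply (exp_opp_bounds _ (2491419975999/500000000000) (2491419976233/500000000000)); lra.
Qed.

Lemma exp_opp_1607_bounds :
  200488177297/1000000000000 <= exp (- (1607/1000)) <= 200488177317/1000000000000.
Proof.
  pose proof exp_1607_bounds.
  apply (exp_opp_bounds _ (24939126421/5000000000) (4987825284673/1000000000000)); lra.
Qed.

Lemma sinh_pos t : 0 < t -> 0 < sinh t.
Proof. intro; rewrite <- sinh_0; apply sinh_lt; assumption. Qed.

Lemma cosh_pos t : 0 < cosh t.
Proof. unfold cosh; pose proof (exp_pos t); pose proof (exp_pos (- t)); lra. Qed.

Lemma cosh_sqr_sub_sinh_sqr t : cosh t ^ 2 - sinh t ^ 2 = 1.
Proof. unfold cosh, sinh; pose proof (exp_mul_exp_opp t); nra. Qed.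

Lemma sinh_lt_cosh t : sinh t < cosh t.
Proof. unfold cosh, sinh; pose proof (exp_pos (- t)); lra. Qed.

Definition sign_change_at (g : R -> R) (r : R) : Prop :=
  (forall t, 0 < t < r -> 0 < g t) /\ (forall t, r < t -> g t < 0).

Lemma increasing_of_derive_pos (g g' : R -> R) a b :
  (forall t, a <= t <= b -> derivable_pt_lim g t (g' t)) ->
  (forall t, a < t < b -> 0 < g' t) -> a < b -> g a < g b.
Proof.
  intros Hd Hpos Hab; destruct (MVT_cor2 g g' a b Hab Hd) as [z [Hmvt Hz]].
  pose proof (Hpos z Hz); nra.
Qed.

Lemma decreasing_of_derive_neg (g g' : R -> R) a b :
  (forall t, a <= t <= b -> derivable_pt_lim g t (g' t)) ->
  (forall t, a < t < b -> g' t < 0) -> a < b -> g b < g a.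
Proof.
  intros Hd Hneg Hab; destruct (MVT_cor2 g g' a b Hab Hd) as [z [Hmvt Hz]].
  pose proof (Hneg z Hz); nra.
Qed.

(* [g] increases on [[0, c]] from [g 0 >= 0] and decreases after [c], so it
   vanishes exactly once, somewhere between [c] and any point where it is negative. *)
Lemma sign_change_of_derivative (g g' : R -> R) c T :
  (forall t, derivable_pt_lim g t (g' t)) ->
  0 <= c -> 0 <= g 0 -> (0 < c \/ 0 < g 0) -> sign_change_at g' c ->
  0 < T -> g T < 0 ->
  exists r, c < r /\ g r = 0 /\ sign_change_at g r.
Proof.
  intros Hd Hc Hg0 Hstart [Hpos Hneg] HT HgT.
  assert (Hinc : forall t, 0 < t <= c -> 0 < g t).
  { intros t Ht; enough (g 0 < g t) by lra.
    apply (increasing_of_derive_pos g g'); [intros; apply Hd | intros; apply Hpos | ]; lra. }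
  assert (Hdec : forall a b, c <= a < b -> g b < g a).
  { intros a b Hab.
    apply (decreasing_of_derive_neg g g'); [intros; apply Hd | intros; apply Hneg | ]; lra. }
  assert (Hgc : 0 < g c).
  { destruct (Req_dec c 0) as [->|]; [destruct Hstart; lra | apply Hinc; lra]. }
  assert (HcT : c < T).
  { destruct (Rlt_le_dec c T) as [|HTc]; [assumption|].
    pose proof (Hinc T (conj HT HTc)); lra. }
  assert (Hcont : continuity g)
    by (intro x; apply derivable_continuous_pt; exists (g' x); apply Hd).
  destruct (IVT_cor g c T Hcont (Rlt_le _ _ HcT)) as [r [Hr Hgr]]; [nra|].
  assert (Hcr : c < r) by (destruct (Req_dec r c) as [->|]; lra).
  exists r; split; [| split; [| split]]; try assumption.
  - intros t Ht; destruct (Rle_lt_dec t c); [apply Hinc; lra|].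
    pose proof (Hdec t r ltac:(lra)); lra.
  - intros t Ht; pose proof (Hdec r t ltac:(lra)); lra.
Qed.

Lemma sign_change_at_between (g : R -> R) r a b :
  sign_change_at g r -> g r = 0 -> 0 < a < b -> 0 < g a -> g b < 0 -> a < r < b.
Proof.
  intros [Hpos Hneg] Hr Hab Ha Hb; split.
  - destruct (Rtotal_order a r) as [|[->|Hra]]; [assumption | lra |].
    pose proof (Hneg a Hra); lra.
  - destruct (Rtotal_order r b) as [|[<-|Hbr]]; [assumption | lra |].
    pose proof (Hpos b ltac:(lra)); lra.
Qed.

Definition h0 t := 2 * cosh t * sinh t - t * (cosh t ^ 2 + 1).
Definition h1 t := 3 * sinh t ^ 2 - 2 * t * cosh t * sinh t.
Definition h2 t := 4 * cosh t * sinh t - 2 * t * (cosh t ^ 2 + sinh t ^ 2).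
Definition h3 t := 2 * (cosh t ^ 2 + sinh t ^ 2) - 8 * t * cosh t * sinh t.
Definition h4 t := -8 * t * (cosh t ^ 2 + sinh t ^ 2).

Ltac derive_hyperbolic :=
  apply is_derive_Reals; unfold h0, h1, h2, h3, h4, cosh, sinh; auto_derive;
  [easy | rewrite exp_Ropp; field; apply Rgt_not_eq, exp_pos].

Lemma derivable_pt_lim_h0 t : derivable_pt_lim h0 t (h1 t). Proof. derive_hyperbolic. Qed.
Lemma derivable_pt_lim_h1 t : derivable_pt_lim h1 t (h2 t). Proof. derive_hyperbolic. Qed.
Lemma derivable_pt_lim_h2 t : derivable_pt_lim h2 t (h3 t). Proof. derive_hyperbolic. Qed.
Lemma derivable_pt_lim_h3 t : derivable_pt_lim h3 t (h4 t). Proof. derive_hyperbolic. Qed.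

Definition fpaper' t := 2 * h0 t / (sinh t ^ 2 * (cosh t ^ 2 + 1)).

Lemma derivable_pt_lim_fpaper t : 0 < t -> derivable_pt_lim fpaper t (fpaper' t).
Proof.
  intro Ht; assert (0 < exp (- t) < exp t) by (split; [apply exp_pos | apply exp_increasing; lra]).
  apply is_derive_Reals; unfold fpaper', fpaper, h0, tanh, cosh, sinh; auto_derive.
  all: rewrite exp_Ropp in *; pose proof (exp_pos t); pose proof (Rinv_r (exp t) ltac:(lra)).
  - repeat split; try nra.
    apply Rmult_integral_contrapositive_currified; [lra | apply Rinv_neq_0_compat; lra].
  - field; repeat split; nra.
Qed.

Lemma fpaper_coth t : 0 < t -> fpaper t = 2 * t * (cosh t / sinh t) - ln ((cosh t ^ 2 + 1) / 2).
Proof. intro Ht; pose proof (sinh_pos t Ht); pose proof (cosh_pos t); unfold fpaper, tanh; field; lra. Qed.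

Lemma fpaper'_pos t : 0 < t -> 0 < h0 t -> 0 < fpaper' t.
Proof.
  intros Ht Hh; pose proof (sinh_pos t Ht).
  apply Rdiv_lt_0_compat; [lra | apply Rmult_lt_0_compat; nra].
Qed.

Lemma fpaper'_neg t : 0 < t -> h0 t < 0 -> fpaper' t < 0.
Proof.
  intros Ht Hh; pose proof (sinh_pos t Ht).
  apply Rdiv_neg_pos; [lra | apply Rmult_lt_0_compat; nra].
Qed.

Lemma fpaper_increasing r a b :
  sign_change_at h0 r -> 0 < a -> a < b -> b <= r -> fpaper a < fpaper b.
Proof.
  intros [Hpos _] Ha Hab Hb; apply (increasing_of_derive_pos fpaper fpaper'); [| | lra].
  - intros; apply derivable_pt_lim_fpaper; lra.
  - intros; apply fpaper'_pos, Hpos; lra.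
Qed.

Lemma fpaper_decreasing r a b :
  sign_change_at h0 r -> 0 < r -> r <= a -> a < b -> fpaper b < fpaper a.
Proof.
  intros [_ Hneg] Hr Ha Hab; apply (decreasing_of_derive_neg fpaper fpaper'); [| | lra].
  - intros; apply derivable_pt_lim_fpaper; lra.
  - intros; apply fpaper'_neg, Hneg; lra.
Qed.

Lemma h0_1606_pos : 0 < h0 (1606/1000).
Proof.
  pose proof exp_1606_bounds; pose proof exp_opp_1606_bounds.
  unfold h0, cosh, sinh; set (E := exp (1606/1000)) in *; set (u := exp (- (1606/1000))) in *.
  assert (E * E >= 2491419975999/500000000000 * (2491419975999/500000000000)) by nra.
  assert (u * u <= 200688765771/1000000000000 * (200688765771/1000000000000)) by nra.
  nra.
Qed.

Lemma h0_1607_neg : h0 (1607/1000) < 0.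
Proof.
  pose proof exp_1607_bounds; pose proof exp_opp_1607_bounds.
  unfold h0, cosh, sinh; set (E := exp (1607/1000)) in *; set (u := exp (- (1607/1000))) in *.
  assert (E * E <= 4987825284673/1000000000000 * (4987825284673/1000000000000)) by nra.
  assert (u * u >= 200488177297/1000000000000 * (200488177297/1000000000000)) by nra.
  nra.
Qed.

Lemma h1_sign_change : exists r, 0 < r /\ sign_change_at h1 r.
Proof.
  assert (Hh4 : sign_change_at h4 0).
  { split; [intros; lra|]; intros t Ht; unfold h4.
    pose proof (pow_lt _ 2 (cosh_pos t)); pose proof (pow2_ge_0 (sinh t)); nra. }
  assert (Hh3_0 : h3 0 = 2) by (unfold h3; rewrite cosh_0, sinh_0; ring).
  assert (Hh3_1 : h3 1 < 0).
  { pose proof (exp_ineq1_le 1); pose proof (exp_mul_exp_opp 1); pose proof (exp_pos (- (1))).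
    assert (exp (- (1)) <= 1/2) by nra.
    unfold h3, cosh, sinh; nra. }
  destruct (sign_change_of_derivative h3 h4 0 1 derivable_pt_lim_h3) as [r3 [Hr3 [_ Hh3]]];
    try lra; auto.
  assert (Hh2_2 : h2 2 < 0).
  { unfold h2, cosh, sinh; pose proof (exp_pos 2); pose proof (exp_pos (- (2))); nra. }
  destruct (sign_change_of_derivative h2 h3 r3 2 derivable_pt_lim_h2) as [r2 [Hr2 [_ Hh2]]];
    try (unfold h2; rewrite cosh_0, sinh_0); try lra; auto.
  assert (Hh1_2 : h1 2 < 0).
  { unfold h1; pose proof (sinh_pos 2 ltac:(lra)); pose proof (sinh_lt_cosh 2); nra. }
  destruct (sign_change_of_derivative h1 h2 r2 2 derivable_pt_lim_h1) as [r1 [Hr1 [_ Hh1]]];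
    try (unfold h1; rewrite cosh_0, sinh_0); try lra; auto.
  exists r1; split; [lra | assumption].
Qed.

Lemma h0_sign_change : exists r, 1606/1000 < r < 1607/1000 /\ sign_change_at h0 r.
Proof.
  destruct h1_sign_change as [r1 [Hr1 Hh1]].
  destruct (sign_change_of_derivative h0 h1 r1 (1607/1000) derivable_pt_lim_h0)
    as [r [_ [Hzero Hh0]]];
    try (unfold h0; rewrite cosh_0, sinh_0); try lra; auto using h0_1607_neg.
  exists r; split; [| assumption].
  apply (sign_change_at_between h0); auto using h0_1606_pos, h0_1607_neg; lra.
Qed.
Lemma coth_1606_bounds :
  541966211/500000000 <= cosh (1606/1000) / sinh (1606/1000) <= 10839324221/10000000000.
Proof.
  pose proof (sinh_pos (1606/1000) ltac:(lra)) as Hs.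
  pose proof exp_1606_bounds; pose proof exp_opp_1606_bounds.
  split; [apply (Rle_div_r _ _ (sinh (1606/1000))) | apply (Rle_div_l _ _ (sinh (1606/1000)))];
    try assumption; unfold cosh, sinh; lra.
Qed.

Lemma ln_cosh_1606_bounds :
  1350309929/1000000000 <= ln ((cosh (1606/1000) ^ 2 + 1) / 2) <= 135030993/100000000.
Proof.
  pose proof exp_1606_bounds; pose proof exp_opp_1606_bounds.
  pose proof exp_1350309929_le; pose proof exp_135030993_ge.
  assert (Hv : exp (1350309929/1000000000) <= (cosh (1606/1000) ^ 2 + 1) / 2
               <= exp (135030993/100000000)).
  { unfold cosh; set (E := exp (1606/1000)) in *; set (u := exp (- (1606/1000))) in *.
    split; nra. }
  rewrite <- (ln_exp (1350309929/1000000000)), <- (ln_exp (135030993/100000000)).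
  split; apply ln_le; try apply exp_pos; try lra.
  pose proof (exp_pos (1350309929/1000000000)); lra.
Qed.

Lemma fpaper_1606_bounds : 21312/10000 <= fpaper (1606/1000) <= 2131283/1000000.
Proof.
  rewrite fpaper_coth by lra; pose proof coth_1606_bounds; pose proof ln_cosh_1606_bounds; lra.
Qed.

Lemma fpaper'_le_near_root z : 1606/1000 <= z <= 1607/1000 -> fpaper' z <= 1/500.
Proof.
  intro Hz; pose proof exp_1606_bounds; pose proof exp_1607_bounds.
  pose proof (exp_le_compat _ _ (proj1 Hz)); pose proof (exp_le_compat _ _ (proj2 Hz)).
  assert (Hu : 200488177297/1000000000000 <= exp (- z) <= 200688765771/1000000000000)
    by (apply (exp_opp_bounds _ (2491419975999/500000000000) (4987825284673/1000000000000)); lra).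
  assert (Hc : 6479/2500 <= cosh z <= 25943/10000) by (unfold cosh; lra).
  assert (Hs : 2391/1000 <= sinh z <= 23937/10000) by (unfold sinh; lra).
  assert (Hcs : cosh z * sinh z <= 25943/10000 * (23937/10000)) by nra.
  assert (Hc2 : 6479/2500 * (6479/2500) <= cosh z ^ 2) by nra.
  assert (Hs2 : 2391/1000 * (2391/1000) <= sinh z ^ 2) by nra.
  assert (Hden : 2391/1000 * (2391/1000) * (6479/2500 * (6479/2500) + 1)
                 <= sinh z ^ 2 * (cosh z ^ 2 + 1)) by nra.
  assert (Hz_c2 : 1606/1000 * (6479/2500 * (6479/2500) + 1) <= z * (cosh z ^ 2 + 1)) by nra.
  unfold fpaper', h0; apply (Rle_div_l _ _ (sinh z ^ 2 * (cosh z ^ 2 + 1))); lra.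
Qed.

Lemma fpaper_at_root_bounds r :
  1606/1000 < r < 1607/1000 -> sign_change_at h0 r -> 21312/10000 <= fpaper r < 21313/10000.
Proof.
  intros Hr Hsc; pose proof fpaper_1606_bounds.
  pose proof (fpaper_increasing r (1606/1000) r Hsc ltac:(lra) (proj1 Hr) (Rle_refl r)).
  destruct (MVT_cor2 fpaper fpaper' (1606/1000) r (proj1 Hr)) as [z [Hmvt Hz]].
  { intros; apply derivable_pt_lim_fpaper; lra. }
  pose proof (fpaper'_le_near_root z ltac:(lra)); nra.
Qed.

Lemma fpaper_le_at_root r x : sign_change_at h0 r -> 0 < r -> 0 < x -> fpaper x <= fpaper r.
Proof.
  intros Hsc Hr Hx; destruct (Rtotal_order x r) as [Hxr | [-> | Hrx]].
  - pose proof (fpaper_increasing r x r Hsc Hx Hxr (Rle_refl r)); lra.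
  - apply Rle_refl.
  - pose proof (fpaper_decreasing r r x Hsc Hr (Rle_refl r) Hrx); lra.
Qed.

Lemma sinh_lt_mul_cosh t : 0 < t -> sinh t < t * cosh t.
Proof.
  intro Ht.
  enough (0 * cosh 0 - sinh 0 < t * cosh t - sinh t) by (rewrite sinh_0 in *; lra).
  apply (increasing_of_derive_pos (fun t => t * cosh t - sinh t) (fun t => t * sinh t));
    [| intros; apply Rmult_lt_0_compat, sinh_pos | ]; try lra.
  intros; apply is_derive_Reals; unfold cosh, sinh; auto_derive; [easy | field].
Qed.

Lemma fpaper_ge_2_sub t : 0 < t -> 2 - sinh t ^ 2 / 2 <= fpaper t.
Proof.
  intro Ht; rewrite fpaper_coth by assumption.
  pose proof (sinh_lt_mul_cosh t Ht); pose proof (sinh_pos t Ht).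
  assert (Hcoth : 1 <= t * (cosh t / sinh t))
    by (replace (t * (cosh t / sinh t)) with (t * cosh t / sinh t) by (field; lra);
        apply (Rle_div_r _ _ (sinh t)); lra).
  pose proof (ln_le_sub_1 ((cosh t ^ 2 + 1) / 2) ltac:(nra)).
  pose proof (cosh_sqr_sub_sinh_sqr t); lra.
Qed.

Lemma sinh_le_2_mul t : 0 < t <= 1 -> sinh t <= 2 * t.
Proof.
  intro Ht; pose proof (sinh_lt_mul_cosh t (proj1 Ht)).
  assert (Hcosh : cosh t <= 2).
  { pose proof exp_le_3; pose proof (exp_le_compat t 1 (proj2 Ht)).
    pose proof (exp_le_compat (- t) 0 ltac:(lra)); rewrite exp_0 in *; unfold cosh; lra. }
  nra.
Qed.

Lemma fpaper_ge_2_of_left_max x : (forall t, 0 < t <= x -> fpaper t <= fpaper x) -> 0 < x -> 2 <= fpaper x.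
Proof.
  intros Hmono Hx; apply Rle_plus_epsilon; intros eps Heps.
  set (t := Rmin x (Rmin (1/2) eps)).
  assert (Ht : 0 < t <= x /\ t <= 1/2 /\ t <= eps)
    by (unfold t, Rmin; repeat destruct Rle_dec; lra).
  pose proof (Hmono t ltac:(lra)); pose proof (fpaper_ge_2_sub t ltac:(lra)).
  pose proof (sinh_le_2_mul t ltac:(lra)); pose proof (sinh_pos t ltac:(lra)); nra.
Qed.

Lemma fpaper_gt_2_large x : 5/2 <= x -> 2 < fpaper x.
Proof.
  intro Hx; rewrite fpaper_coth by lra.
  pose proof (sinh_pos x ltac:(lra)); pose proof (sinh_lt_cosh x).
  assert (Hcoth : 1 <= cosh x / sinh x) by (apply (Rle_div_r _ _ (sinh x)); lra).
  assert (Hv : (cosh x ^ 2 + 1) / 2 < exp (2 * x - 2)).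
  { pose proof exp_2_le; pose proof exp_5_ge; pose proof (exp_pos 2).
    pose proof (exp_le_compat 5 (x + x) ltac:(lra)); rewrite exp_plus in *.
    assert (Hsplit : exp (2 * x - 2) * exp 2 = exp x * exp x)
      by (rewrite <- !exp_plus; f_equal; ring).
    pose proof (exp_mul_exp_opp x); pose proof (exp_pos (- x)).
    assert (exp (- x) <= 1) by nra.
    unfold cosh; nra. }
  apply ln_increasing in Hv; [rewrite ln_exp in Hv; nra | pose proof (pow2_ge_0 (cosh x)); lra].
Qed.

Lemma fpaper_gt_2 r x : sign_change_at h0 r -> 0 < r < 5/2 -> 0 < x -> 2 < fpaper x.
Proof.
  intros Hsc Hr Hx; destruct (Rle_lt_dec x r) as [Hxr | Hrx].
  - pose proof (fpaper_increasing r (x/2) x Hsc ltac:(lra) ltac:(lra) Hxr).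
    enough (2 <= fpaper (x/2)) by lra.
    apply fpaper_ge_2_of_left_max; [| lra]; intros t Ht.
    destruct (Rle_lt_or_eq_dec t (x/2) (proj2 Ht)) as [Hlt | ->]; [| lra].
    apply Rlt_le, (fpaper_increasing r t (x/2) Hsc); lra.
  - destruct (Rlt_le_dec x (5/2)); [| apply fpaper_gt_2_large; lra].
    pose proof (fpaper_decreasing r x (5/2) Hsc ltac:(lra) ltac:(lra) ltac:(lra)).
    pose proof (fpaper_gt_2_large (5/2) ltac:(lra)); lra.
Qed.

Theorem lemma2 :
  exists x1 : R,
    1606/1000 <= x1 < 1607/1000 /\
    21312/10000 <= fpaper x1 < 21313/10000 /\
    (forall x : R, 0 < x -> 2 < fpaper x /\ fpaper x <= fpaper x1).
Proof.
  destruct h0_sign_change as [r [Hr Hsc]]; exists r.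
  split; [lra | split; [exact (fpaper_at_root_bounds r Hr Hsc) |]].
  intros x Hx; split.
  - apply (fpaper_gt_2 r); [assumption | lra | assumption].
  - apply fpaper_le_at_root; [assumption | lra | assumption].
Qed.
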